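(* Let $m>n$ be coprime positive integers, $\alpha=\epsilon_i-\delta_j$, $\lambda\in X_\alpha$, $\lambda^+=t_\alpha(\lambda)$, $\Lambda=x(\lambda)$ and $\Lambda^+=\tau_\alpha(\Lambda)$. If $(\Lambda^+,\beta)=0$ for $\beta=\epsilon_i-\delta_k$ with $k\in[m]$, then one of the following holds: (a) $k=j+1$, $\lambda'_j=\lambda'_{j+1}$ and $\beta=\epsilon_i-\delta_{j+1}$; (b) $\alpha=\epsilon_n-\delta_m$, $\beta=\epsilon_n-\delta_1$, $\lambda_1<m$, and $(m,1^{n-1})\subseteq\lambda^+$ (i.e. $\lambda^+_1=m$ and $\lambda^+_n\ge1$).
   Context: $X$ is the set of partitions $\lambda=(\lambda_1\ge\dots\ge\lambda_n\ge0)$ with $\lambda_1\le m$, drawn in an $n\times m$ rectangle with rows $\epsilon_1,\dots,\epsilon_n$ top to bottom and columns $\delta_1,\dots,\delta_m$; the diagram consists of boxes $\epsilon_i-\delta_j$ with $j\le\lambda_{n+1-i}$; $\lambda'_j=\#\{i:\lambda_i\ge j\}$. $X_\alpha$: diagrams for which box $\alpha$ is an outer corner; $t_\alpha$ adds that box. $x(\lambda)=(a_1,\dots,a_n|b_1,\dots,b_m)$ with $a_i=m(n-i)+n\lambda_{n+1-i}$, $b_j=n(j-1)+m\lambda'_j$; $\tau_\alpha$ adds $n$ to $a_i$ and $m$ to $b_j$. For $\Lambda=(a|b)$ and $\gamma=\epsilon_p-\delta_q$, $(\Lambda,\gamma)=a_p-b_q$. *)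

From mathcomp Require Import all_boot all_order all_algebra.
Set Implicit Arguments. Unset Strict Implicit. Unset Printing Implicit Defensive.
Import GRing.Theory Num.Theory.

(* A partition lambda = (lambda_1 >= ... >= lambda_n >= 0) with lambda_1 <= m
   is represented by a function lam : nat -> nat, 1-indexed: lam p = lambda_p
   for 1 <= p <= n (values outside [1,n] are irrelevant). *)
Definition is_part (n m : nat) (lam : nat -> nat) : Prop :=
  (forall p, 1 <= p < n -> lam p.+1 <= lam p) /\ (0 < n -> lam 1 <= m).

Definition conj (n : nat) (lam : nat -> nat) (j : nat) : nat :=
  count (fun p => j <= lam p) (iota 1 n).

(* box eps_i - delta_j (row i from top, column j) lies in the diagram *)
Definition in_diag (n : nat) (lam : nat -> nat) (i j : nat) : bool :=
  j <= lam (n + 1 - i).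

(* t_alpha, alpha = eps_i - delta_j: add the box in row i, i.e. increase
   lambda_{n+1-i} by one. *)
Definition t_alpha (n : nat) (i : nat) (lam : nat -> nat) : nat -> nat :=
  fun p => if p == n + 1 - i then (lam p).+1 else lam p.

(* X_alpha: lambda in X such that the box alpha = eps_i - delta_j (inside the
   n x m rectangle) is an outer corner: it is not in the diagram, it is the
   next box of its row, and adding it yields again a partition in X. *)
Definition in_X_alpha (n m : nat) (i j : nat) (lam : nat -> nat) : Prop :=
  [/\ 1 <= i <= n, 1 <= j <= m, is_part n m lam,
      ~~ in_diag n lam i j
    & (lam (n + 1 - i)).+1 = j /\ is_part n m (t_alpha n i lam)].

(* weights Lambda = (a_1,...,a_n | b_1,...,b_m), 1-indexed functions *)
Record weight := Weight { wa : nat -> nat; wb : nat -> nat }.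

Definition x_of (n m : nat) (lam : nat -> nat) : weight :=
  Weight (fun i => m * (n - i) + n * lam (n + 1 - i))
         (fun j => n * (j - 1) + m * conj n lam j).

Definition tau_alpha (n m i j : nat) (L : weight) : weight :=
  Weight (fun p => if p == i then wa L p + n else wa L p)
         (fun q => if q == j then wb L q + m else wb L q).

Definition pairing (L : weight) (p q : nat) : int :=
  ((wa L p)%:Z - (wb L q)%:Z)%R.

From mathcomp Require Import all_boot all_order all_algebra.
From mathcomp Require Import zify.
Set Implicit Arguments. Unset Strict Implicit. Unset Printing Implicit Defensive.

(* Since alpha is an outer corner, lambda_{n+1-i} = j - 1 and
   lambda'_j = n - i, so (Lambda^+, eps_i - delta_k) = 0 reads
   m (n - i) + n j = n (k - 1) + m lambda'_k (+ m if k = j).  The case k = j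
   would force m = n.  Otherwise m (n - i - lambda'_k) = n (k - 1 - j), so by
   coprimality m divides k - 1 - j, which lies in [-m, m - 2]: either k = j + 1
   and lambda'_{j+1} = lambda'_j, or j = m, k = 1 and lambda'_1 = 2n - i, which
   forces i = n and every row of lambda to be nonempty. *)

Lemma coprime_lin_eq m n a c j k : coprime m n ->
  1 <= j <= m -> 1 <= k <= m ->
  m * a + n * j = n * k.-1 + m * c ->
  (k = j.+1 /\ c = a) \/ [/\ j = m, k = 1 & c = a + n].
Proof.
move=> cop /andP[j1 jm] /andP[k1 km] E.
have m_gt0 : 0 < m by lia.
have dvd_m x d : m * x = n * d -> m %| d.
  by move=> Exd; rewrite -(Gauss_dvdr _ cop) -Exd dvdn_mulr.
case: (leqP j k.-1) => [jk|kj].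
- have /dvd_m/dvdn_leq small : m * (a - c) = n * (k.-1 - j) by nia.
  have k_eq : k.-1 - j = 0 by apply/eqP; apply: contraT => /negbTE; lia.
  left; split; first by lia.
  by apply/eqP; rewrite -(eqn_pmul2l m_gt0); apply/eqP; nia.
- have /dvd_m/dvdn_leq small : m * (c - a) = n * (j - k.-1) by nia.
  have jkm : j - k.-1 = m by have := small (_ : 0 < _); lia.
  have [-> ->] : j = m /\ k = 1 by lia.
  right; split => //.
  by apply/eqP; rewrite -(eqn_pmul2l m_gt0); apply/eqP; nia.
Qed.

Lemma pairing_eq0 L p q : (pairing L p q == 0%R) = (wa L p == wb L q).
Proof. by rewrite /pairing GRing.subr_eq0 eqz_nat. Qed.

Lemma is_part_nonincr n m lam p q : is_part n m lam ->
  1 <= p -> p <= q -> q <= n -> lam q <= lam p.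
Proof.
move=> [step _] p1 /subnK <-; elim: (q - p) => [|d IH] qn //=.
by rewrite addSn (leq_trans (step _ _)) ?IH //; lia.
Qed.

Lemma t_alpha_ge n i lam p : lam p <= t_alpha n i lam p.
Proof. by rewrite /t_alpha; case: eqP. Qed.

Lemma conj_le n lam j : conj n lam j <= n.
Proof. by rewrite /conj -[X in _ <= X](size_iota 1 n) count_size. Qed.

Lemma conj_eq_n n lam j p : conj n lam j = n -> 1 <= p <= n -> j <= lam p.
Proof.
move=> /eqP; rewrite /conj -[X in _ == X](size_iota 1 n) -all_count.
by move=> /allP all_j p_bds; apply: all_j; rewrite mem_iota; lia.
Qed.

Section OuterCorner.

Variables (n m i j : nat) (lam : nat -> nat).
Hypothesis corner : in_X_alpha n m i j lam.

Lemma corner_row : lam (n + 1 - i) = j.-1.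
Proof. by case: corner => _ _ _ _ [<- _]. Qed.

(* Rows above row n + 1 - i reach column j in t_alpha lam, hence in lam;
   rows below it stop short of the new box. *)
Lemma conj_corner : conj n lam j = n - i.
Proof.
case: corner => /andP[i1 i_n] _ part _ [row t_part].
set r := n + 1 - i in row t_part.
have r_bds : 1 <= r <= n by rewrite /r; lia.
rewrite /conj (_ : n = r.-1 + (n - r.-1)); last by lia.
rewrite iotaD count_cat.
have -> : count (fun p => j <= lam p) (iota 1 r.-1) = r.-1.
  apply/eqP; rewrite -[X in _ == X](size_iota 1 r.-1) -all_count.
  apply/allP => p; rewrite mem_iota => p_bds.
  have := is_part_nonincr t_part (_ : 1 <= p) (_ : p <= r) (_ : r <= n).
  rewrite /t_alpha eqxx -/r ifN; last by lia.
  by rewrite row; apply; lia.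
rewrite (eq_in_count (a2 := pred0)) ?count_pred0; first by rewrite /r; lia.
move=> p; rewrite mem_iota => p_bds /=.
have := is_part_nonincr part (_ : 1 <= r) (_ : r <= p) (_ : p <= n); lia.
Qed.

Lemma wa_tau_corner : wa (tau_alpha n m i j (x_of n m lam)) i = m * (n - i) + n * j.
Proof. by rewrite /= eqxx corner_row; case: corner => _ /andP[j1 _] *; nia. Qed.

End OuterCorner.

Theorem lemma4p7 (m n : nat) (hn : 0 < n) (hnm : n < m) (hcop : coprime m n)
  (i j : nat) (lam : nat -> nat) (hX : in_X_alpha n m i j lam) (k : nat)
  (hk : 1 <= k <= m)
  (h0 : pairing (tau_alpha n m i j (x_of n m lam)) i k = 0%R) :
  (k = j.+1 /\ conj n lam j = conj n lam j.+1)
  \/ [/\ i = n, j = m, k = 1, lam 1 < m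
       & t_alpha n i lam 1 = m /\ 1 <= t_alpha n i lam n].
Proof.
have Cj := conj_corner hX; have row := corner_row hX.
case: (hX) => /andP[i1 i_n] j_bds _ _ _.
move/eqP: h0; rewrite pairing_eq0 wa_tau_corner //= => /eqP.
case: eqP => [-> | _]; first by rewrite Cj; nia.
rewrite subn1 => /(coprime_lin_eq hcop j_bds hk).
case=> [[-> Cj1] | [j_eq_m -> Ck]]; first by left; rewrite Cj Cj1.
have [i_eq_n C1] : i = n /\ conj n lam 1 = n by have := conj_le n lam 1; lia.
move: row; rewrite i_eq_n j_eq_m addKn => row.
right; split => //; first by lia.
split; first by rewrite /t_alpha addKn eqxx row prednK //; lia.
by rewrite (leq_trans _ (t_alpha_ge _ _ _ _)) // (conj_eq_n C1) //; lia.
Qed.
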